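(* Let $r>0$, $p\in(0,1)$ and let $\boldsymbol{\mu}=(\mu_s)_{s\ge1}$ be the zero-truncated negative binomial distribution $\mu_s=\gamma\,\dfrac{\Gamma(s+r)\,p^s}{\Gamma(r)\,s!}$, $s\ge1$, with $\gamma=\dfrac{(1-p)^r}{1-(1-p)^r}$. Let $\Pi_n\sim ESC_{[n]}(\boldsymbol{\mu})$ with allocation variables $\mathbf{z}$. For $i\in[n]$, with $K_{-i}$ the number of clusters of $\mathbf{z}_{-i}$ and $S_j$ the size of cluster $j$ in $\mathbf{z}_{-i}$, $$\mathbb{P}(z_i=j\mid\mathbf{z}_{-i})\propto\begin{cases}S_j+r, & j=1,\dots,K_{-i},\\ (K_{-i}+1)\,\gamma\, r, & j=K_{-i}+1\ \text{(new cluster)}.\end{cases}$$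
   Context: For a fixed distribution $\boldsymbol{\mu}$ on the positive integers with $\mu_1>0$, $ESC_{[n]}(\boldsymbol{\mu})$ is the law of the following random partition of $[n]$: let $S_1,S_2,\dots$ be i.i.d. with law $\boldsymbol{\mu}$, condition on the event that $\sum_{j=1}^k S_j=n$ for some $k$, let $K$ be that $k$, and let $(z_1,\dots,z_n)$ be a uniformly random permutation of the vector with $S_1$ copies of $1$, ..., $S_K$ copies of $K$; the partition has blocks $\{i:z_i=j\}$. $\mathbf{z}_{-i}$ denotes the allocations of all points other than $i$; the statement concerns which cluster of $\mathbf{z}_{-i}$ point $i$ joins, or whether it forms a new cluster, with proportionality constant independent of $j$. *)

From HB Require Import structures.
From mathcomp Require Import all_boot all_order all_algebra.
From mathcomp Require Import reals exp.
Set Implicit Arguments. Unset Strict Implicit. Unset Printing Implicit Defensive.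
Import Order.TTheory GRing.Theory Num.Theory.
Local Open Scope ring_scope.

(* Allocations of the points [n] = 'I_n to cluster labels.  Labels are
   0-based: label l here is label l+1 of the paper. *)
Definition alloc (n : nat) := {ffun 'I_n -> 'I_n}.

Definition nclus n (z : alloc n) : nat := #|[set z x | x : 'I_n]|.

Definition csize n (z : alloc n) (l : nat) : nat := #|[set x | (z x : nat) == l]|.

Definition valid_alloc n (z : alloc n) : bool :=
  [forall l : 'I_n, (l \in [set z x | x : 'I_n]) == ((l : nat) < nclus z)%N].

(* Unnormalized ESC weight of an allocation z with K clusters of sizes
   s_1..s_K:  P(K, S_1=s_1,...,S_K=s_K) * P(uniform permutation = z | S)
   = (prod_j mu_{s_j}) * (prod_j s_j!) / n!. *)
Definition esc_weight (R : realType) (mu : nat -> R) n (z : alloc n) : R :=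
  if valid_alloc z then
    (\prod_(l < n | (l < nclus z)%N) (mu (csize z l) * (csize z l)`!%:R))
      / n`!%:R
  else 0.

(* The ESC_[n](mu) law: conditioning on the event "some partial sum equals n"
   = normalizing by its total mass. *)
Definition esc_pmf (R : realType) (mu : nat -> R) n (z : alloc n) : R :=
  esc_weight mu z / \sum_(z' : alloc n) esc_weight mu z'.

Definition esc_prob (R : realType) (mu : nat -> R) n (E : pred (alloc n)) : R :=
  \sum_(z : alloc n | E z) esc_pmf mu z.

Definition singleton_at n (i : 'I_n) (z : alloc n) : bool :=
  csize z (z i) == 1%N.

(* Allocation z_{-i} of the points other than i, with labels made consecutive
   (if i was a singleton with label l, labels above l are shifted down). *)
Definition zminus n (i : 'I_n) (z : alloc n) (x : 'I_n) : nat :=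
  if singleton_at i z then
    (if (z i < z x)%N then (z x).-1 else z x)
  else z x.

(* Cluster of z_{-i} joined by point i: its label if it joins an existing
   cluster, and K_{-i} (0-based index of the "new cluster" K_{-i}+1) if
   it forms a new cluster. *)
Definition zi_cluster n (i : 'I_n) (z : alloc n) : nat :=
  if singleton_at i z then (nclus z).-1 else z i.

Definition zminus_is n (i : 'I_n) (w : 'I_n -> nat) : pred (alloc n) :=
  fun z => [forall x : 'I_n, (x != i) ==> (zminus i z x == w x)].

Definition Kminus n (i : 'I_n) (w : 'I_n -> nat) : nat :=
  size (undup [seq w x | x <- enum 'I_n & x != i]).

Definition Sminus n (i : 'I_n) (w : 'I_n -> nat) (j : nat) : nat :=
  #|[set x | (x != i) && (w x == j)]|.

(* rising factorial r (r+1) ... (r+s-1) = Gamma(s+r)/Gamma(r) *)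
Definition rising (R : realType) (r : R) (s : nat) : R :=
  \prod_(k < s) (r + k%:R).

Definition nb_gamma (R : realType) (r p : R) : R :=
  (1 - p) `^ r / (1 - (1 - p) `^ r).

Definition ztnb (R : realType) (r p : R) (s : nat) : R :=
  if s == 0%N then 0 else nb_gamma r p * rising r s * p ^+ s / s`!%:R.

(* Fix the allocation w of the points other than i, with labels 0..K-1.  The
   allocations z with z_{-i} = w are exactly: i joins an existing cluster j of w
   (j < K), or i forms a singleton whose label m <= K is inserted among the
   labels of w, the labels >= m being shifted up.  In the first case z has the
   cluster sizes of w except S_j + 1; in the second case the sizes of w plus a 1.
   Since mu_s s! = gamma r (r+1)...(r+s-1) p^s, the ESC weight of z is a common
   factor times (S_j + r) p in the first case and times gamma r p in each of the
   K + 1 cases of the second. *)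
From HB Require Import structures.
From mathcomp Require Import all_boot all_order all_algebra.
From mathcomp Require Import reals exp.
From mathcomp Require Import zify ring.
Set Implicit Arguments. Unset Strict Implicit. Unset Printing Implicit Defensive.
Import Order.TTheory GRing.Theory Num.Theory.

Section ValidAlloc.
Variable n : nat.
Implicit Type z : alloc n.

Lemma nclus_leq z : (nclus z <= n)%N.
Proof. by rewrite /nclus -[X in (_ <= X)%N]card_ord max_card. Qed.

Lemma mem_imset_valid z l : valid_alloc z ->
  (l \in [set z x | x : 'I_n]) = (l < nclus z)%N.
Proof. by move=> /forallP/(_ l)/eqP. Qed.

Lemma valid_alloc_lt z x : valid_alloc z -> (z x < nclus z)%N.
Proof. by move=> vz; rewrite -mem_imset_valid // imset_f. Qed.

Lemma valid_alloc_surj z l : valid_alloc z -> (l < nclus z)%N ->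
  exists y, (z y : nat) = l.
Proof.
move=> vz lz; have ln : (l < n)%N by exact: leq_trans lz (nclus_leq z).
have : Ordinal ln \in [set z x | x : 'I_n] by rewrite mem_imset_valid.
by case/imsetP=> y _ zy; exists y; rewrite -zy.
Qed.

Lemma card_ord_ltn N : (N <= n)%N -> #|[set l : 'I_n | (l < N)%N]| = N.
Proof.
move=> Nn; have -> : [set l : 'I_n | (l < N)%N] = widen_ord Nn @: 'I_N.
  apply/setP=> l; rewrite inE; apply/idP/imsetP => [lN|[k _ ->]].
    by exists (Ordinal lN) => //; apply: val_inj.
  by rewrite /= ltn_ord.
by rewrite card_imset ?card_ord // => a b [] /val_inj.
Qed.

Lemma valid_alloc_of_image z N : (N <= n)%N ->
  (forall l : 'I_n, (l \in [set z x | x : 'I_n]) = (l < N)%N) ->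
  nclus z = N /\ valid_alloc z.
Proof.
move=> Nn imz; have nz : nclus z = N.
  by rewrite /nclus -[RHS](card_ord_ltn Nn); apply: eq_card => l; rewrite imz inE.
by split=> //; apply/forallP=> l; rewrite imz nz.
Qed.

End ValidAlloc.

Section Complement.
Variables (n : nat) (i : 'I_n) (w : 'I_n -> nat).
Local Notation K := (Kminus i w).

Definition used_label (l : nat) : bool := [exists x, (x != i) && (w x == l)].

Lemma Kminus_eq N : (forall l, used_label l = (l < N)%N) -> K = N.
Proof.
move=> usedE; rewrite /Kminus; set s := [seq w x | x <- enum 'I_n & x != i].
have mem_s l : (l \in s) = (l < N)%N.
  rewrite -usedE; apply/mapP/existsP => [[x]|[x /andP[xi /eqP <-]]].
    by rewrite mem_filter => /andP[xi _] ->; exists x; rewrite xi eqxx.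
  by exists x; rewrite // mem_filter xi mem_enum.
rewrite -(size_iota 0 N); apply/perm_size/uniq_perm; rewrite ?undup_uniq ?iota_uniq //.
by move=> l; rewrite mem_undup mem_s mem_iota.
Qed.

Lemma Kminus_lt : (K < n)%N.
Proof.
rewrite /Kminus (leq_ltn_trans (size_undup _)) // size_map size_filter.
have := count_predC (pred1 i) (enum 'I_n).
rewrite size_enum_ord count_uniq_mem ?enum_uniq // mem_enum => cnt_n.
by apply: (leq_trans _ (eq_leq cnt_n)).
Qed.

Lemma zminus_is_nonsingleton z : zminus_is i w z -> ~~ singleton_at i z ->
  forall x, x != i -> (z x : nat) = w x.
Proof.
by move=> /forallP zw ns x xi; have := zw x; rewrite xi /zminus (negbTE ns) => /eqP.
Qed.

Lemma zminus_is_singleton z : zminus_is i w z -> singleton_at i z ->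
  forall x, x != i -> w x = if (z i < z x)%N then (z x).-1 else z x.
Proof. by move=> /forallP zw sg x xi; have := zw x; rewrite xi /zminus sg => /eqP. Qed.

Lemma singleton_neq z x : singleton_at i z -> x != i -> (z x : nat) != z i.
Proof.
move=> /cards1P[y Ay] xi; apply: contra xi => /eqP zx.
have : i \in [set x | (z x : nat) == z i] by rewrite inE.
have : x \in [set x | (z x : nat) == z i] by rewrite inE zx.
by rewrite Ay !inE => /eqP -> /eqP ->.
Qed.

Lemma used_label_nonsingleton z : valid_alloc z -> zminus_is i w z ->
  ~~ singleton_at i z -> forall l, used_label l = (l < nclus z)%N.
Proof.
move=> vz zw ns; have zwE := zminus_is_nonsingleton zw ns.
move=> l; apply/existsP/idP => [[x /andP[xi /eqP <-]]|lz].
  by rewrite -zwE ?valid_alloc_lt.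
have [y zy] := valid_alloc_surj vz lz.
have [x /andP[xi zx]] : exists x, (x != i) && ((z x : nat) == l).
  have [yi|yi] := eqVneq y i; last by exists y; rewrite yi zy eqxx.
  (* i is not alone in its cluster, so its cluster contains another point *)
  move: ns; rewrite /singleton_at /csize (cardsD1 i) inE eqxx add1n eqSS.
  rewrite -lt0n card_gt0 => /set0Pn[x].
  by rewrite !inE => /andP[xi zx]; exists x; rewrite xi (eqP zx) -zy yi eqxx.
by exists x; rewrite xi -zwE.
Qed.

Lemma used_label_singleton z : valid_alloc z -> zminus_is i w z ->
  singleton_at i z -> forall l, used_label l = (l < (nclus z).-1)%N.
Proof.
move=> vz zw sg; have zwE := zminus_is_singleton zw sg.
have ziz := valid_alloc_lt i vz.
move=> l; apply/existsP/idP => [[x /andP[xi /eqP <-]]|lz].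
  rewrite zwE //; have := singleton_neq sg xi; have := valid_alloc_lt x vz.
  case: ifP; lia.
(* l is the label of w coming from label l or l + 1 of z, whichever skips z i *)
pose l' := if (l < z i)%N then l else l.+1.
have [y zy] : exists y, (z y : nat) = l'.
  by apply: valid_alloc_surj vz _; rewrite /l'; case: ifP; lia.
have yi : y != i by apply/eqP => yi; move: zy; rewrite yi /l'; case: ifP; lia.
by exists y; rewrite yi zwE // zy /l'; apply/eqP; case: ifP; case: ifP; lia.
Qed.

Lemma used_label_zminus z : valid_alloc z -> zminus_is i w z ->
  forall l, used_label l = (l < K)%N.
Proof.
move=> vz zw; have [sg|ns] := boolP (singleton_at i z).
  by have usedE := used_label_singleton vz zw sg; rewrite (Kminus_eq usedE).
by have usedE := used_label_nonsingleton vz zw ns; rewrite (Kminus_eq usedE).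
Qed.

End Complement.

Section Extensions.
Variables (n : nat) (i : 'I_n) (w : 'I_n -> nat).
Local Notation K := (Kminus i w).
Local Notation S := (Sminus i w).
Hypothesis used_labelE : forall l, used_label i w l = (l < K)%N.

Lemma w_lt x : x != i -> (w x < K)%N.
Proof. by move=> xi; rewrite -used_labelE; apply/existsP; exists x; rewrite xi eqxx. Qed.

Lemma Sminus_gt0 l : (l < K)%N -> (0 < S l)%N.
Proof. by rewrite -used_labelE => /existsP[x xl]; apply/card_gt0P; exists x; rewrite inE. Qed.

(* [insubd i] is only a cast to ['I_n]: all labels below are < K + 1 <= n *)
Definition join_alloc (j : nat) : alloc n :=
  [ffun x => insubd i (if x == i then j else w x)].

Definition insert_alloc (m : nat) : alloc n :=
  [ffun x => insubd i (if x == i then m else if (m <= w x)%N then (w x).+1 else w x)].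

Lemma join_allocE j : (j < K)%N ->
  forall x, (join_alloc j x : nat) = if x == i then j else w x.
Proof.
move=> jK x; rewrite ffunE val_insubd; have := Kminus_lt i w.
by case: eqP => [_|/eqP/w_lt xK] Kn; rewrite ifT //; lia.
Qed.

Lemma insert_allocE m : (m <= K)%N -> forall x, (insert_alloc m x : nat) =
   if x == i then m else if (m <= w x)%N then (w x).+1 else w x.
Proof.
move=> mK x; rewrite ffunE val_insubd; have := Kminus_lt i w.
case: eqP => [_|/eqP/w_lt xK] Kn; first by rewrite ifT //; lia.
by case: (leqP m (w x)) => _; rewrite ifT //; lia.
Qed.

Lemma csize_join_alloc j : (j < K)%N ->
  forall l, csize (join_alloc j) l = (S l + (l == j))%N.
Proof.
move=> jK l; rewrite /csize (cardsD1 i) inE join_allocE // eqxx addnC eq_sym.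
by congr addn; apply: eq_card => x; rewrite !inE join_allocE //; case: (x == i).
Qed.

Lemma csize_insert_alloc m : (m <= K)%N -> forall l,
  csize (insert_alloc m) l =
    if (l < m)%N then S l else if l == m then 1%N else S l.-1.
Proof.
move=> mK l; rewrite /csize (cardsD1 i) inE insert_allocE // eqxx.
have [lm|ml|->] := ltngtP l m.
- rewrite add0n; apply: eq_card => x; rewrite !inE insert_allocE //.
  by case: (x == i) => //=; case: ifP => ?; apply/eqP/eqP; lia.
- rewrite add0n; apply: eq_card => x; rewrite !inE insert_allocE //.
  by case: (x == i) => //=; case: ifP => ?; apply/eqP/eqP; lia.
- rewrite add1n; congr _.+1; apply/eqP; rewrite cards_eq0; apply/eqP/setP => x.
  by rewrite !inE insert_allocE //; case: (x == i) => //=; case: ifP => ?; apply/eqP; lia.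
Qed.

Lemma join_alloc_spec j : (j < K)%N ->
  [/\ valid_alloc (join_alloc j), nclus (join_alloc j) = K,
      ~~ singleton_at i (join_alloc j), zminus_is i w (join_alloc j)
    & zi_cluster i (join_alloc j) = j].
Proof.
move=> jK; have [nz vz] : nclus (join_alloc j) = K /\ valid_alloc (join_alloc j).
  apply: valid_alloc_of_image; first exact/ltnW/Kminus_lt.
  move=> l; apply/imsetP/idP => [[x _ ->]|].
    by rewrite join_allocE //; case: eqP => [//|/eqP/w_lt].
  rewrite -used_labelE => /existsP[x /andP[xi /eqP wx]]; exists x => //.
  by apply: val_inj; rewrite /= join_allocE // (negbTE xi).
have ns : ~~ singleton_at i (join_alloc j).
  rewrite /singleton_at csize_join_alloc // join_allocE // !eqxx addn1 eqSS.
  by rewrite -lt0n Sminus_gt0.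
split=> //; last by rewrite /zi_cluster (negbTE ns) join_allocE // eqxx.
apply/forallP => x; apply/implyP => xi.
by rewrite /zminus (negbTE ns) join_allocE // (negbTE xi).
Qed.

Lemma insert_alloc_spec m : (m <= K)%N ->
  [/\ valid_alloc (insert_alloc m), nclus (insert_alloc m) = K.+1,
      singleton_at i (insert_alloc m), zminus_is i w (insert_alloc m)
    & zi_cluster i (insert_alloc m) = K].
Proof.
move=> mK; have [nz vz] : nclus (insert_alloc m) = K.+1 /\ valid_alloc (insert_alloc m).
  apply: valid_alloc_of_image; first exact: Kminus_lt.
  move=> l; apply/imsetP/idP => [[x _ ->]|lK].
    rewrite insert_allocE //; case: eqP => [_|/eqP/w_lt]; first lia.
    by case: ifP; lia.
  have [lm|ml|lm] := ltngtP l m; last first.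
  - by exists i => //; apply: val_inj; rewrite /= insert_allocE // eqxx.
  - have : used_label i w l.-1 by rewrite used_labelE; lia.
    case/existsP => x /andP[xi /eqP wx]; exists x => //.
    by apply: val_inj; rewrite /= insert_allocE // (negbTE xi) wx ifT //; lia.
  - have : used_label i w l by rewrite used_labelE; lia.
    case/existsP => x /andP[xi /eqP wx]; exists x => //.
    by apply: val_inj; rewrite /= insert_allocE // (negbTE xi) wx ifF //; lia.
have sg : singleton_at i (insert_alloc m).
  by rewrite /singleton_at csize_insert_alloc // insert_allocE // eqxx ltnn eqxx.
split=> //; last by rewrite /zi_cluster sg nz.
apply/forallP => x; apply/implyP => xi; have := w_lt xi.
rewrite /zminus sg !insert_allocE // (negbTE xi) eqxx.
by case: (leqP m (w x)) => ? ?; apply/eqP; case: ifP; lia.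
Qed.

Lemma zminus_is_join z : valid_alloc z -> zminus_is i w z ->
  ~~ singleton_at i z -> z = join_alloc (z i) /\ (z i < K)%N.
Proof.
move=> vz zw ns; have zwE := zminus_is_nonsingleton zw ns.
have ziK : (z i < K)%N.
  by rewrite (Kminus_eq (used_label_nonsingleton vz zw ns)) valid_alloc_lt.
split=> //; apply/ffunP => x; apply: val_inj; rewrite /= join_allocE //.
by case: eqP => [->|/eqP/zwE].
Qed.

Lemma zminus_is_insert z : valid_alloc z -> zminus_is i w z ->
  singleton_at i z -> z = insert_alloc (z i) /\ (z i <= K)%N.
Proof.
move=> vz zw sg; have zwE := zminus_is_singleton zw sg.
have ziK : (z i <= K)%N.
  rewrite (Kminus_eq (used_label_singleton vz zw sg)).
  by have := valid_alloc_lt i vz; lia.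
split=> //; apply/ffunP => x; apply: val_inj; rewrite /= insert_allocE //.
case: eqP => [->|/eqP xi] //; rewrite zwE //; have := singleton_neq sg xi.
by case: (ltnP (z i) (z x)) => ? ?; case: ifP; lia.
Qed.

Lemma zi_cluster_zminus z : valid_alloc z -> zminus_is i w z ->
  zi_cluster i z = if singleton_at i z then K else z i.
Proof.
move=> vz zw; rewrite /zi_cluster; case: ifP => // sg.
have [zE ziK] := zminus_is_insert vz zw sg.
by have [_ nz _ _ _] := insert_alloc_spec ziK; rewrite zE nz.
Qed.

End Extensions.
Local Open Scope ring_scope.

Section Weights.
Variables (R : realType) (r p : R).
Local Notation mu := (ztnb r p).

Definition mu_fact (s : nat) : R := mu s * s`!%:R.

Lemma mu_factE s : (0 < s)%N -> mu_fact s = nb_gamma r p * rising r s * p ^+ s.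
Proof.
move=> s0; rewrite /mu_fact /ztnb gtn_eqF // divfK //.
by rewrite pnatr_eq0 -lt0n fact_gt0.
Qed.

Lemma mu_factS s : (0 < s)%N -> mu_fact s.+1 = mu_fact s * ((r + s%:R) * p).
Proof. by move=> s0; rewrite !mu_factE // /rising big_ord_recr /= exprS; ring. Qed.

Lemma mu_fact1 : mu_fact 1 = nb_gamma r p * r * p.
Proof. by rewrite mu_factE // /rising big_ord1 addr0 expr1. Qed.

Lemma esc_weight_valid n (z : alloc n) : valid_alloc z ->
  esc_weight mu z = (\prod_(0 <= l < nclus z) mu_fact (csize z l)) / n`!%:R.
Proof.
move=> vz; rewrite /esc_weight vz.
by rewrite (big_nat_widen _ _ _ _ _ (nclus_leq z)) big_mkord.
Qed.

End Weights.

Section ConditionalWeights.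
Variables (R : realType) (r p : R) (n : nat) (i : 'I_n) (w : 'I_n -> nat).
Local Notation K := (Kminus i w).
Local Notation S := (Sminus i w).
Local Notation mu := (ztnb r p).
Hypothesis used_labelE : forall l, used_label i w l = (l < K)%N.

Definition base_weight : R := (\prod_(0 <= l < K) mu_fact r p (S l)) / n`!%:R.

Lemma esc_weight_join j : (j < K)%N ->
  esc_weight mu (join_alloc i w j) = base_weight * ((r + (S j)%:R) * p).
Proof.
move=> jK; have [vz nz _ _ _] := join_alloc_spec used_labelE jK.
have jr : j \in index_iota 0 K by rewrite mem_index_iota.
rewrite esc_weight_valid // nz /base_weight mulrAC; congr (_ / _).
rewrite !(bigD1_seq j jr (iota_uniq 0 (K - 0))) /= csize_join_alloc // eqxx addn1.
rewrite mu_factS ?Sminus_gt0 // [RHS]mulrAC; congr (_ * _).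
apply: eq_bigr => l lj; rewrite csize_join_alloc //.
by rewrite (negbTE lj) addn0.
Qed.

Lemma esc_weight_insert m : (m <= K)%N ->
  esc_weight mu (insert_alloc i w m) = base_weight * (nb_gamma r p * r * p).
Proof.
move=> mK; have [vz nz _ _ _] := insert_alloc_spec used_labelE mK.
have csizeE := csize_insert_alloc used_labelE mK.
rewrite esc_weight_valid // nz /base_weight mulrAC; congr (_ / _).
rewrite (@big_cat_nat _ _ _ m 0 K.+1) ?leqW // (@big_cat_nat _ _ _ m 0 K) //=.
rewrite (@big_ltn _ _ _ m K.+1) ?ltnS // big_add1 /= csizeE ltnn eqxx mu_fact1.
have -> : \prod_(0 <= l < m) mu_fact r p (csize (insert_alloc i w m) l) =
          \prod_(0 <= l < m) mu_fact r p (S l).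
  by apply: eq_big_nat => l /andP[_ lm]; rewrite csizeE lm.
have -> : \prod_(m <= l < K) mu_fact r p (csize (insert_alloc i w m) l.+1) =
          \prod_(m <= l < K) mu_fact r p (S l).
  by apply: eq_big_nat => l /andP[ml _]; rewrite csizeE ltnNge ltnW //= gtn_eqF.
ring.
Qed.

End ConditionalWeights.

Section ConditionalSums.
Variables (R : realType) (r p : R) (n : nat).
Local Notation mu := (ztnb r p).

Lemma esc_probE (E : pred (alloc n)) :
  esc_prob mu E = (\sum_(z | E z) esc_weight mu z) / \sum_(z : alloc n) esc_weight mu z.
Proof. by rewrite /esc_prob /esc_pmf -mulr_suml. Qed.

Lemma sum_esc_weight_valid (E : pred (alloc n)) :
  \sum_(z | E z) esc_weight mu z = \sum_(z | valid_alloc z && E z) esc_weight mu z.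
Proof.
rewrite (bigID (@valid_alloc n)) /= [X in _ + X]big1 ?addr0.
  by apply: eq_bigl => z; rewrite andbC.
by move=> z /andP[_ /negbTE nv]; rewrite /esc_weight nv.
Qed.

Variables (i : 'I_n) (w : 'I_n -> nat).
Local Notation K := (Kminus i w).
Local Notation S := (Sminus i w).
Hypothesis used_labelE : forall l, used_label i w l = (l < K)%N.

Lemma sum_esc_weight_join j : (j < K)%N ->
  \sum_(z | valid_alloc z && (zminus_is i w z && (zi_cluster i z == j)))
    esc_weight mu z = base_weight r p i w * ((r + (S j)%:R) * p).
Proof.
move=> jK; rewrite (big_pred1 (join_alloc i w j)) ?esc_weight_join // => z /=.
apply/idP/eqP => [/and3P[vz zw]|->]; last first.
  by have [-> _ _ -> ->] := join_alloc_spec used_labelE jK; rewrite eqxx.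
rewrite (zi_cluster_zminus used_labelE) //; case: ifP => [_ /eqP jE|ns /eqP <-].
  by move: jK; rewrite -jE ltnn.
by case: (zminus_is_join used_labelE vz zw (negbT ns)).
Qed.

Lemma sum_esc_weight_new :
  \sum_(z | valid_alloc z && (zminus_is i w z && (zi_cluster i z == K)))
    esc_weight mu z = base_weight r p i w * (K.+1%:R * (nb_gamma r p * r * p)).
Proof.
have insert_inj : injective (fun m : 'I_K.+1 => insert_alloc i w m).
  move=> a b /(congr1 (fun z : alloc n => nat_of_ord (z i))); cbv beta.
  by rewrite !insert_allocE ?eqxx -1?ltnS // => /val_inj.
transitivity (\sum_(z in [set insert_alloc i w m | m : 'I_K.+1]) esc_weight mu z).
  apply: eq_bigl => z; apply/and3P/imsetP => [[vz zw]|[m _ ->]].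
    rewrite (zi_cluster_zminus used_labelE) //; case: ifP => [sg _|ns /eqP ziK].
      have [zE ziK] := zminus_is_insert used_labelE vz zw sg.
      by exists (Ordinal (ziK : (z i < K.+1)%N)).
    have [_ ziK'] := zminus_is_join used_labelE vz zw (negbT ns).
    by move: ziK'; rewrite ziK ltnn.
  have mK : (m <= K)%N by rewrite -ltnS.
  by have [-> _ _ -> ->] := insert_alloc_spec used_labelE mK.
rewrite big_imset /=; last exact: in2W.
rewrite (eq_bigr (fun _ => base_weight r p i w * (nb_gamma r p * r * p))).
  by rewrite sumr_const card_ord -mulr_natr; ring.
by move=> m _; rewrite esc_weight_insert // -ltnS.
Qed.

Lemma sum_esc_weight_gt j : (K < j)%N ->
  \sum_(z | valid_alloc z && (zminus_is i w z && (zi_cluster i z == j)))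
    esc_weight mu z = 0.
Proof.
move=> Kj; rewrite big1 // => z /and3P[vz zw].
rewrite (zi_cluster_zminus used_labelE) //; case: ifP => [_|ns /eqP ziE].
  by rewrite ltn_eqF.
have [_ ziK] := zminus_is_join used_labelE vz zw (negbT ns).
by move: Kj; rewrite -ziE ltnNge ltnW.
Qed.

End ConditionalSums.

Theorem mainTheorem6 (R : realType) (r p : R) (hr : 0 < r)
    (hp0 : 0 < p) (hp1 : p < 1) (n : nat) (i : 'I_n) (w : 'I_n -> nat) :
  let mu := ztnb r p in
  let B := zminus_is i w in
  let K := Kminus i w in
  0 < esc_prob mu B ->
  exists c : R, forall j : nat,
    esc_prob mu (fun z => B z && (zi_cluster i z == j)) / esc_prob mu B =
    c * (if (j < K)%N then (Sminus i w j)%:R + r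
         else if j == K then (K.+1)%:R * nb_gamma r p * r
         else 0).
Proof.
move=> mu B K; rewrite {}/mu {}/B {}/K => B_gt0.
have [z0 /andP[vz0 zw0]|none] := pickP (fun z : alloc n => valid_alloc z && zminus_is i w z).
  have used_labelE := used_label_zminus vz0 zw0.
  set Z := \sum_(z : alloc n) esc_weight (ztnb r p) z.
  exists (base_weight r p i w * p / Z / esc_prob (ztnb r p) (zminus_is i w)) => j.
  rewrite esc_probE sum_esc_weight_valid.
  have [jK|Kj|->] := ltngtP j (Kminus i w).
  - by rewrite sum_esc_weight_join //; ring.
  - by rewrite sum_esc_weight_gt // !(mul0r, mulr0).
  - by rewrite sum_esc_weight_new //; ring.
(* otherwise no allocation realises z_{-i} = w and B has probability 0 *)
by move: B_gt0; rewrite esc_probE sum_esc_weight_valid big_pred0 ?mul0r ?ltxx.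
Qed.
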